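(* Let $d\geq 2$ and let $\rho^s=\sum_{i,j=0}^{d-1}\rho^s_{ij}|i\rangle\langle j|$ be a state on $H_d=\mathbb{C}^d$. If for some $i\neq j$ $$|\rho^s_{ij}|>\frac{\sqrt{1-(\rho^s_{ii}+\rho^s_{jj})^2}}{2},$$ then there exists an incoherent operation $\Lambda$ on $H_d\otimes H_d$ such that $\Lambda(\rho^s\otimes|0\rangle\langle 0|)$ violates a Bell inequality (and hence is Bell-nonlocal).
   Context: Coherence is taken with respect to the computational basis $\{|0\rangle,\dots,|d-1\rangle\}$ of $H_d$ and the product computational basis of $H_d\otimes H_d$. The set $\mathcal{I}$ of incoherent states consists of the states diagonal in this basis. An incoherent operation is a completely positive trace-preserving map $\Lambda(\rho)=\sum_k K_k\rho K_k^\dagger$ with $K_k\mathcal{I}K_k^\dagger\subseteq\mathcal{I}$ for every Kraus operator $K_k$. A state is Bell-nonlocal if its measurement statistics do not admit a local hidden variable model. *)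

From HB Require Import structures.
From mathcomp Require Import all_boot all_order all_algebra.
From mathcomp Require Import complex mxtens.
From mathcomp Require Import reals.
Set Implicit Arguments. Unset Strict Implicit. Unset Printing Implicit Defensive.
Import Order.TTheory GRing.Theory Num.Theory Num.Def.
Local Open Scope ring_scope.

Section Quantum.
Variable R : realType.
Local Notation C := (R[i]).

Definition adjmx {m n} (A : 'M[C]_(m, n)) : 'M[C]_(n, m) := (map_mx conjC A)^T.

Definition psdmx {n} (A : 'M[C]_n) : Prop :=
  adjmx A = A /\ forall v : 'cV[C]_n, 0 <= (adjmx v *m A *m v) 0 0.

Definition is_state {n} (rho : 'M[C]_n) : Prop := psdmx rho /\ \tr rho = 1.

Definition incoherent_state {n} (delta : 'M[C]_n) : Prop :=
  is_state delta /\ is_diag_mx delta.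

Definition kraus_map {n} (Ks : seq 'M[C]_n) (rho : 'M[C]_n) : 'M[C]_n :=
  \sum_(K <- Ks) K *m rho *m adjmx K.

(* incoherent operation: CPTP map with Kraus operators each mapping incoherent
   states to (unnormalized) incoherent states, i.e. diagonal matrices *)
Definition incoherent_kraus {n} (Ks : seq 'M[C]_n) : Prop :=
  \sum_(K <- Ks) adjmx K *m K = 1%:M /\
  forall K, K \in Ks -> forall delta : 'M[C]_n,
      incoherent_state delta -> is_diag_mx (K *m delta *m adjmx K).

Definition pm1_observable {d} (A : 'M[C]_d) : Prop :=
  adjmx A = A /\ A *m A = 1%:M.

Definition violates_CHSH {d} (sigma : 'M[C]_(d * d)) : Prop :=
  exists A0 A1 B0 B1 : 'M[C]_d,
    [/\ pm1_observable A0, pm1_observable A1, pm1_observable B0 &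
        pm1_observable B1] /\
    2 < `| \tr (sigma *m (A0 *t B0 + A0 *t B1 + A1 *t B0 - A1 *t B1)) |.

Definition ket0bra0 {d} : 'M[C]_d.+1 := delta_mx 0 0.

End Quantum.
Arguments ket0bra0 {R d}.

(* The generalised CNOT |k,l> |-> |k,l+k> permutes the computational basis, so
   it is an incoherent unitary, and it maps rho (x) |0><0| to the maximally
   correlated state sum_(k,l) rho_kl |k,k><l,l|.  In that state the CHSH
   expectation of the A_x (x) B_y only involves the products of entries
   (A_x)_kl (B_y)_kl.  Take +-1 observables that are 2x2 blocks on span{|i>,|j>}
   and the identity elsewhere: the identity part contributes 2 (1 - p), with
   p = rho_ii + rho_jj <= 1, and the block contributes
   2 (a p + b^* rho_ij + b rho_ji) for a real a with a^2 + |b|^2 = 1.  Aligning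
   the phase of b with rho_ij and taking the rational point
   a = (1 - t^2) / (1 + t^2), b = 2 rho_ij / (1 + t^2), where t = |rho_ij|,
   gives the value 2 + 4 t^2 (2 - p) / (1 + t^2) > 2.  Hence any nonzero
   coherence rho_ij already yields a violation: the hypothesis of the theorem
   is only used to get rho_ij != 0. *)

From HB Require Import structures.
From mathcomp Require Import all_boot all_order all_algebra.
From mathcomp Require Import fingroup perm complex mxtens reals ring.
Set Implicit Arguments. Unset Strict Implicit. Unset Printing Implicit Defensive.
Import Order.TTheory GRing.Theory Num.Theory Num.Def.
Local Open Scope ring_scope.

Lemma sum_pair_split (V : nmodType) (I : finType) (i j : I) (F : I -> V) :
  i != j -> \sum_k F k = F i + F j + \sum_(k | (k != i) && (k != j)) F k.
Proof.
move=> neq_ij; rewrite (bigD1 i) //= (bigD1 j) 1?eq_sym //= addrA.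
by under eq_bigl do rewrite andbC.
Qed.

Definition chsh_kernel (K : pzRingType) n (A0 A1 B0 B1 : 'M[K]_n) : 'M[K]_n :=
  \matrix_(k, l) (A0 k l * (B0 k l + B1 k l) + A1 k l * (B0 k l - B1 k l)).

Section Block2.
Variables (K : comPzRingType) (n : nat) (i j : 'I_n).
Hypothesis neq_ij : i != j.

Definition block2_mx (x a b c e : K) : 'M[K]_n := \matrix_(k, l)
  if k == i then (if l == i then a else if l == j then b else 0)
  else if k == j then (if l == i then c else if l == j then e else 0)
  else if k == l then x else 0.

Let neq_ji : (j == i) = false. Proof. by rewrite eq_sym (negbTE neq_ij). Qed.

Lemma block2_mx_row_i x a b c e l :
  block2_mx x a b c e i l = if l == i then a else if l == j then b else 0.
Proof. by rewrite mxE eqxx. Qed.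

Lemma block2_mx_row_j x a b c e l :
  block2_mx x a b c e j l = if l == i then c else if l == j then e else 0.
Proof. by rewrite mxE neq_ji eqxx. Qed.

Lemma block2_mx_row_other x a b c e k l : k != i -> k != j ->
  block2_mx x a b c e k l = if k == l then x else 0.
Proof. by move=> /negbTE ki /negbTE kj; rewrite mxE ki kj. Qed.

Lemma block2_mx_col_other x a b c e k l : l != i -> l != j ->
  block2_mx x a b c e k l = if k == l then x else 0.
Proof.
move=> /negbTE li /negbTE lj; rewrite mxE li lj /=.
have [->|_] := eqVneq k i; first by rewrite eq_sym li.
by have [->|_] := eqVneq k j; first by rewrite eq_sym lj.
Qed.

Lemma block2_mx1 : block2_mx 1 1 0 0 1 = 1%:M.
Proof.
apply/matrixP => k l; rewrite [RHS]mxE.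
have [->|ki] := eqVneq k i; [|have [->|kj] := eqVneq k j].
- by rewrite block2_mx_row_i (eq_sym i l); case: ifP => // _; case: ifP.
- rewrite block2_mx_row_j (eq_sym j l).
  have [->|_] := eqVneq l i; first by rewrite (negbTE neq_ij).
  by case: ifP.
- by rewrite block2_mx_row_other //; case: ifP.
Qed.

Lemma block2_mxM x a b c e x' a' b' c' e' :
  block2_mx x a b c e *m block2_mx x' a' b' c' e' =
  block2_mx (x * x') (a * a' + b * c') (a * b' + b * e')
            (c * a' + e * c') (c * b' + e * e').
Proof.
apply/matrixP => k l; rewrite mxE.
have [->|ki] := eqVneq k i; [|have [->|kj] := eqVneq k j].
- rewrite (sum_pair_split _ neq_ij) big1 ?addr0 => [|m /andP[mi mj]]; last first.
    by rewrite block2_mx_row_i (negbTE mi) (negbTE mj) mul0r.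
  rewrite !block2_mx_row_i block2_mx_row_j eqxx neq_ji eqxx.
  by do ![case: ifP => _]; ring.
- rewrite (sum_pair_split _ neq_ij) big1 ?addr0 => [|m /andP[mi mj]]; last first.
    by rewrite block2_mx_row_j (negbTE mi) (negbTE mj) mul0r.
  rewrite !block2_mx_row_j block2_mx_row_i eqxx neq_ji eqxx.
  by do ![case: ifP => _]; ring.
- rewrite (big_only1 k) // => [|m mk _]; last first.
    by rewrite block2_mx_row_other // eq_sym (negbTE mk) mul0r.
  rewrite !block2_mx_row_other // eqxx.
  by case: ifP => _; ring.
Qed.

Lemma mxtrace_mul_block2 (A : 'M[K]_n) x a b c e :
  \tr (A *m block2_mx x a b c e) =
  A i i * a + A i j * c + A j i * b + A j j * e +
  (\sum_(k | (k != i) && (k != j)) A k k) * x.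
Proof.
rewrite /mxtrace (sum_pair_split _ neq_ij) mulr_suml; congr (_ + _).
  rewrite !mxE !(sum_pair_split _ neq_ij).
  rewrite !big1 ?addr0 => [|m /andP[mi mj]|m /andP[mi mj]]; last 2 first.
  - by rewrite block2_mx_row_other // (negbTE mj) mulr0.
  - by rewrite block2_mx_row_other // (negbTE mi) mulr0.
  by rewrite !block2_mx_row_i !block2_mx_row_j eqxx neq_ji eqxx addrA.
apply: eq_bigr => k /andP[ki kj]; rewrite mxE (big_only1 k) // => [|m mk _].
  by rewrite block2_mx_row_other // eqxx.
by rewrite block2_mx_col_other // (negbTE mk) mulr0.
Qed.

Lemma chsh_kernel_block2 a b c :
  chsh_kernel (block2_mx 1 1 0 0 (-1)) (block2_mx 1 0 1 1 0)
              (block2_mx 1 a b c (-a)) (block2_mx 1 a (-b) (-c) (-a)) =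
  block2_mx 2 (2 * a) (2 * b) (2 * c) (2 * a).
Proof. by apply/matrixP => k l; rewrite !mxE; do ![case: ifP => _]; ring. Qed.

End Block2.

Section Quantum.
Variable R : realType.
Local Notation C := R[i].

Lemma psdmx_diag_ge0 m (A : 'M[C]_m) k : psdmx A -> 0 <= A k k.
Proof.
case=> _ /(_ (delta_mx k 0)); rewrite /adjmx.
have -> : map_mx conjC (delta_mx k 0 : 'cV[C]_m) = delta_mx k 0.
  by apply/matrixP => x y; rewrite !mxE rmorph_nat.
by rewrite trmx_delta -rowE -colE !mxE.
Qed.

Lemma psdmx_conj_entry m (A : 'M[C]_m) k l : psdmx A -> A l k = (A k l)^*.
Proof. by case=> /(congr1 (fun (M : 'M[C]_m) => M l k)); rewrite !mxE => <-. Qed.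

Lemma adjmx_block2 n (i j : 'I_n) (x a b c e : C) : i != j ->
  adjmx (block2_mx i j x a b c e) = block2_mx i j x^* a^* c^* b^* e^*.
Proof.
move=> neq_ij; apply/matrixP => k l; rewrite !mxE.
have [->|ki] := eqVneq k i; [|have [->|kj] := eqVneq k j].
- by case: (l == i); case: (l == j); rewrite ?rmorph0.
- by case: (l == i); case: (l == j); rewrite ?rmorph0.
have [->|_] := eqVneq l i; first by rewrite (negbTE ki) rmorph0.
have [->|_] := eqVneq l j; first by rewrite (negbTE kj) rmorph0.
by rewrite eq_sym; case: ifP; rewrite ?rmorph0.
Qed.

Lemma pm1_observable_block2 n (i j : 'I_n) (a b c e : C) : i != j ->
  a \is Num.real -> c = b^* -> e = - a -> a * a + b * c = 1 ->
  pm1_observable (block2_mx i j 1 a b c e).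
Proof.
move=> neq_ij a_real -> -> norm1; split.
  have Na_real : - a \is Num.real by rewrite rpredN.
  rewrite adjmx_block2 // rmorph1 conjCK.
  by rewrite (conj_Creal a_real) (conj_Creal Na_real).
rewrite block2_mxM // -(block2_mx1 _ neq_ij).
by congr block2_mx; [ring | | ring | ring | rewrite -norm1; ring].
Qed.

Lemma state_diag_pair_le1 m (A : 'M[C]_m) i j : is_state A -> i != j ->
  A i i + A j j <= 1.
Proof.
move=> [psdA <-] neq_ij; rewrite /mxtrace (sum_pair_split _ neq_ij) lerDl.
by apply: sumr_ge0 => k _; exact: psdmx_diag_ge0.
Qed.

Lemma adjmx_perm_mx m (s : 'S_m) : adjmx (perm_mx s : 'M[C]_m) = perm_mx s^-1.
Proof.
rewrite /adjmx -tr_perm_mx; congr trmx.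
by apply/matrixP => x y; rewrite !mxE rmorph_nat.
Qed.

Lemma perm_mx_conjE m (s : 'S_m) (T : 'M[C]_m) x y :
  (perm_mx s *m T *m adjmx (perm_mx s)) x y = T (s x) (s y).
Proof. by rewrite adjmx_perm_mx -row_permE -col_permE !mxE. Qed.

Lemma perm_mx_incoherent_kraus m (s : 'S_m) :
  incoherent_kraus [:: perm_mx s : 'M[C]_m].
Proof.
split; first by rewrite big_seq1 adjmx_perm_mx -perm_mxM mulVg perm_mx1.
move=> K; rewrite inE => /eqP -> delta [_ /is_diag_mxP delta_diag].
apply/is_diag_mxP => x y neq_xy.
rewrite perm_mx_conjE delta_diag //.
by apply: contra_neq neq_xy => /val_inj/perm_inj ->.
Qed.

Section Copy.
Context {m : nat}.
Local Notation idx := (@mxtens_index m.+1 m.+1).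
Local Notation unidx := (@mxtens_unindex m.+1 m.+1).

Definition twin (k : 'I_m.+1) := idx (k, k).

(* [copy_mx^T] is the isometry |k> |-> |k,k>, hence [copy_mx^T *m A *m copy_mx]
   is the maximally correlated state sum_(k,l) A_kl |k,k><l,l|. *)
Definition copy_mx : 'M[C]_(m.+1, m.+1 * m.+1) := rowsub twin 1%:M.

Lemma copy_mxE k x : copy_mx k x = (twin k == x)%:R.
Proof. by rewrite !mxE. Qed.

Lemma mxtrace_copy_conj (A : 'M[C]_m.+1) M :
  \tr (copy_mx^T *m A *m copy_mx *m M) = \tr (A *m mxsub twin twin M).
Proof.
rewrite -!mulmxA mxtrace_mulC -!mulmxA; congr (\tr (A *m _)).
rewrite mulmxA /copy_mx mul_rowsub_mx mul1mx.
rewrite trmx_mxsub trmx1 mulmx_colsub mulmx1.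
by apply/matrixP => k l; rewrite !mxE.
Qed.

Lemma cnot_perm_inj :
  injective (fun x => idx ((unidx x).1, (unidx x).2 - (unidx x).1)).
Proof.
move=> x y /(can_inj (@mxtens_indexK _ _)) /eqP.
rewrite -[x]mxtens_unindexK -[y]mxtens_unindexK !mxtens_indexK.
case: (unidx x) (unidx y) => [k l] [k' l']; rewrite xpair_eqE /=.
by case/andP=> /eqP <- /eqP /(canRL (subrK k)); rewrite subrK => <-.
Qed.

(* [perm_mx s] sends e_(s x) to e_x, so [perm_mx cnot_perm] is the generalised
   CNOT |k,l> |-> |k,l+k>. *)
Definition cnot_perm : 'S_(m.+1 * m.+1) := perm cnot_perm_inj.

Lemma cnot_permE k l : cnot_perm (idx (k, l)) = idx (k, l - k).
Proof. by rewrite permE mxtens_indexK. Qed.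

Lemma sum_twin_indicator k l (F : 'I_m.+1 -> C) :
  \sum_a (twin a == idx (k, l))%:R * F a = (k == l)%:R * F k.
Proof.
rewrite (big_only1 k) // => [|a ak _].
  by rewrite (inj_eq (can_inj (@mxtens_indexK _ _))) xpair_eqE eqxx.
by rewrite (inj_eq (can_inj (@mxtens_indexK _ _))) xpair_eqE (negbTE ak) mul0r.
Qed.

Lemma kraus_cnot_ket0 (A : 'M[C]_m.+1) :
  kraus_map [:: perm_mx cnot_perm] (A *t ket0bra0) = copy_mx^T *m A *m copy_mx.
Proof.
apply/matrixP => x y; rewrite /kraus_map big_seq1 perm_mx_conjE.
case: (mxtens_indexP x) => k l; case: (mxtens_indexP y) => k' l'.
rewrite !cnot_permE tensmxE /ket0bra0 !mxE.
under eq_bigr => b _.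
  rewrite mxE; under eq_bigr => a _ do rewrite mxE copy_mxE.
  by rewrite sum_twin_indicator copy_mxE mulrC; over.
rewrite sum_twin_indicator !subr_eq0 (eq_sym l) (eq_sym l') -mulnb natrM.
ring.
Qed.

Lemma mxsub_twin_chsh (A0 A1 B0 B1 : 'M[C]_m.+1) :
  mxsub twin twin (A0 *t B0 + A0 *t B1 + A1 *t B0 - A1 *t B1) =
  chsh_kernel A0 A1 B0 B1.
Proof. by apply/matrixP => k l; rewrite !mxE /twin !mxtens_indexK; ring. Qed.

End Copy.

Lemma copy_state_violates_CHSH m (A : 'M[C]_m.+1) (i j : 'I_m.+1) :
  is_state A -> i != j -> A i j != 0 ->
  violates_CHSH (copy_mx^T *m A *m copy_mx).
Proof.
move=> stA neq_ij nzA; have [psdA trA] := stA.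
set c := A i j; set t := `|c|; set p := A i i + A j j.
set q := \sum_(k | (k != i) && (k != j)) A k k.
have q_def : q = 1 - p.
  by rewrite -trA /mxtrace (sum_pair_split _ neq_ij) -/p -/q addrC addrK.
have p_le1 : p <= 1 := state_diag_pair_le1 stA neq_ij.
have t_gt0 : 0 < t by rewrite normr_gt0.
have conj_c : c^* = t ^+ 2 / c by rewrite normCK [c * _]mulrC mulfK.
pose u := 1 + t ^+ 2.
have u_gt0 : 0 < u by rewrite addr_gt0 ?exprn_gt0.
have u_real : u \is Num.real := gtr0_real u_gt0.
have field_nz : (u != 0) && (c != 0) by rewrite gt_eqF.
pose a := (1 - t ^+ 2) / u; pose b := 2 * c / u.
have a_real : a \is Num.real.
  by rewrite rpredM ?rpredV ?rpredB ?rpredX ?rpred1 ?normr_real.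
have conj_b : b^* = 2 * (t ^+ 2 / c) / u.
  by rewrite !rmorphM fmorphV rmorph_nat /= conj_c (conj_Creal u_real).
exists (block2_mx i j 1 1 0 0 (-1)), (block2_mx i j 1 0 1 1 0),
  (block2_mx i j 1 a b b^* (- a)), (block2_mx i j 1 a (- b) (- b^*) (- a)).
split; first split.
- by apply: pm1_observable_block2; rewrite ?rpred1 ?rmorph0 //; ring.
- by apply: pm1_observable_block2; rewrite ?rpred0 ?rmorph1 ?oppr0 //; ring.
- apply: pm1_observable_block2; rewrite // conj_b /a /b /u.
  by field; exact: field_nz.
- apply: pm1_observable_block2; rewrite ?rmorphN // conj_b /a /b /u.
  by field; exact: field_nz.
rewrite mxtrace_copy_conj mxsub_twin_chsh chsh_kernel_block2.
rewrite mxtrace_mul_block2 //.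
have conj_Aji : A j i = c^* := psdmx_conj_entry i j psdA.
rewrite conj_Aji -/q q_def conj_b conj_c.
have -> : A i i * (2 * a) + c * (2 * (2 * (t ^+ 2 / c) / u)) +
    t ^+ 2 / c * (2 * b) + A j j * (2 * a) + (1 - p) * 2 =
    2 + 4 * t ^+ 2 * (2 - p) / u.
  by rewrite /p /a /b /u; field; exact: field_nz.
have gap : 0 < 4 * t ^+ 2 * (2 - p) / u.
  rewrite divr_gt0 // !mulr_gt0 ?exprn_gt0 //.
  by rewrite subr_gt0 (le_lt_trans p_le1) ?ltr1n.
by rewrite gtr0_norm ?ltrDl // addr_gt0.
Qed.

End Quantum.

Theorem theorem2 (R : realType) (d : nat) (hd : (2 <= d)%N)
  (rho : 'M[R[i]]_d.-1.+1) :
  is_state rho ->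
  (exists i j : 'I_d.-1.+1, i != j /\
     `|rho i j| > sqrtC (1 - (rho i i + rho j j) ^+ 2) / 2) ->
  exists Ks : seq 'M[R[i]]_(d.-1.+1 * d.-1.+1),
    incoherent_kraus Ks /\
    violates_CHSH (kraus_map Ks (rho *t ket0bra0)).
Proof.
move=> st_rho [i [j [neq_ij coherence_gt]]].
have diag_ge0 k : 0 <= rho k k by apply: psdmx_diag_ge0; case: st_rho.
have nz_rho : rho i j != 0.
  rewrite -normr_gt0; apply: le_lt_trans coherence_gt.
  rewrite divr_ge0 ?ler0n // sqrtC_ge0 subr_ge0 exprn_ile1 ?addr_ge0 ?diag_ge0 //.
  exact: state_diag_pair_le1.
exists [:: perm_mx cnot_perm]; split; first exact: perm_mx_incoherent_kraus.
by rewrite kraus_cnot_ket0; exact: copy_state_violates_CHSH st_rho neq_ij nz_rho.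
Qed.
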